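(* If $\Sigma$ is of type $\mathfrak d_l$ ($l\ge4$) and $\Gamma=Z_{\widetilde M}(\widetilde K)$ (of order 4), then $$d(P_\Gamma)=\begin{cases}\frac12(\psi,\psi)^{-1/2}l^{1/2}, & l\text{ even},\\ \frac{\sqrt2}{4}(\psi,\psi)^{-1/2}(2l-1)^{1/2}, & l\text{ odd}.\end{cases}$$
   Context: Let $(\mathfrak u,\theta,\langle,\rangle)$ be a reduced, compact, irreducible orthogonal involutive Lie algebra ($\mathfrak u=\mathfrak k_0\oplus\mathfrak p_*$ the $\pm1$ eigenspaces of $\theta$), $\widetilde U$ the simply connected group of $\mathfrak u$, $\widetilde K$ the fixed group of the induced involution, $\widetilde M=\widetilde U/\widetilde K$, $\widetilde{\mathrm{Exp}}(X)=\widetilde\exp(X)\widetilde K$ ($X\in\mathfrak p_*$), and $Z_{\widetilde M}(\widetilde K)$ the group of points of $\widetilde M$ fixed by all left translations by $\widetilde K$. $(\cdot,\cdot)$ is the Killing form of $\mathfrak u\otimes\mathbb C$, positive definite on $\mathfrak h_{\mathfrak p_0}=\sqrt{-1}\mathfrak h_{\mathfrak p_*}$ ($\mathfrak h_{\mathfrak p_*}$ maximal abelian in $\mathfrak p_*$); $\Sigma\subset\mathfrak h_{\mathfrak p_0}$ is the restricted root system with simple roots $\gamma_1,\dots,\gamma_l$ and highest root $\psi=\sum d_i\gamma_i$; $e_j$ defined by $(e_j,\gamma_i)=\delta_{ij}/d_j$; $\triangle=\{x:(x,\gamma_i)\ge0\ \forall i,\ (x,\psi)\le1\}$; $P_\Gamma=\{x\in\triangle:(x,e_i)\le\frac12(e_i,e_i)$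 for all $i$ with $\widetilde{\mathrm{Exp}}(\pi\sqrt{-1}e_i)\in\Gamma\}$; $d(P_\Gamma)=\max_{x\in P_\Gamma}(x,x)^{1/2}$. *)

From HB Require Import structures.
From mathcomp Require Import all_boot all_order all_algebra.
Set Implicit Arguments. Unset Strict Implicit. Unset Printing Implicit Defensive.
Import Order.TTheory GRing.Theory Num.Theory.
Local Open Scope ring_scope.

(* The inner product ( , ) on h_p0 ~ R^l (any Euclidean space of dim l is
   isometric to R^l with the standard dot product). *)
Definition dot (R : nzRingType) (n : nat) (u v : 'rV[R]_n) : R := (u *m v^T) 0 0.

(* Dynkin diagram of D_l, nodes 0..l-1 (paper's gamma_1..gamma_l shifted by 1):
   chain 0 - 1 - ... - (l-2), and node (l-1) attached to (l-3). *)
Definition adjD (l i j : nat) : bool :=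
  [&& ((i.+1 == j) || (j.+1 == i)), i <= l - 2 & j <= l - 2]%N
  || ((i == l - 3) && (j == l - 1))%N || ((i == l - 1) && (j == l - 3))%N.

Definition cartanD (R : nzRingType) (l : nat) (i j : 'I_l) : R :=
  if i == j then 2 else if adjD l i j then -1 else 0.

Definition dcoef (R : nzRingType) (l : nat) (i : 'I_l) : R :=
  if (((i:nat) == 0) || ((i:nat) == l - 2) || ((i:nat) == l - 1))%N then 1 else 2.

Definition hroot (R : nzRingType) (l : nat) (gamma : 'I_l -> 'rV[R]_l) : 'rV[R]_l :=
  \sum_(i < l) dcoef R i *: gamma i.

Definition alcove (R : realDomainType) (l : nat) (gamma : 'I_l -> 'rV[R]_l)
  (psi x : 'rV[R]_l) : Prop :=
  (forall i, 0 <= dot x (gamma i)) /\ dot x psi <= 1.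

(* P_Gamma, where S is the set of indices i with Exp(pi sqrt(-1) e_i) in Gamma. *)
Definition PGamma (R : realFieldType) (l : nat) (gamma e : 'I_l -> 'rV[R]_l)
  (psi : 'rV[R]_l) (S : pred 'I_l) (x : 'rV[R]_l) : Prop :=
  alcove gamma psi x /\ (forall i, S i -> dot x (e i) <= dot (e i) (e i) / 2).

(* For Gamma = Z_M(K) in type D_l (order 4): Gamma = {o} u {Exp(pi sqrt(-1) e_i) :
   d_i = 1}, i.e. the indices 0, l-2, l-1 (paper: 1, l-1, l). *)
Definition GammaIdxD (l : nat) : pred 'I_l :=
  fun i : 'I_l => (((i:nat) == 0) || ((i:nat) == l - 2) || ((i:nat) == l - 1))%N.

Definition maxnorm_is (R : rcfType) (l : nat) (P : 'rV[R]_l -> Prop) (r : R) : Prop :=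
  (exists2 x, P x & Num.sqrt (dot x x) = r) /\
  (forall x, P x -> Num.sqrt (dot x x) <= r).

(* Let omega_j be the fundamental weights of the standard realisation of D_l in R^l,
   whose simple roots are eps_i - eps_(i+1) (i < l - 1) and eps_(l-2) + eps_(l-1).
   The map x |-> sum_i (x, gamma_i) omega_i is a similarity of ratio sqrt c sending e_j
   to omega_j whenever d_j = 1, so it carries P_Gamma onto the polytope of the w in R^l
   with w_0 >= ... >= w_(l-2) >= |w_(l-1)|, w_0 <= 1/2, sum_k w_k <= l/4 and
   sum_k w_k - 2 w_(l-1) <= l/4.  There the |w_k| lie in [0, 1/2] and sum to at most
   l/4, which forces sum_k w_k^2 <= (2l - (l mod 2))/16, with equality at
   (1/2, ..., 1/2, [1/4,] 0, ..., 0).  As (psi, psi) = 2c, this is the claim. *)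
From HB Require Import structures.
From mathcomp Require Import all_boot all_order all_algebra.
From mathcomp Require Import ring lra zify.
Set Implicit Arguments. Unset Strict Implicit. Unset Printing Implicit Defensive.
Import Order.TTheory GRing.Theory Num.Theory.
Local Open Scope ring_scope.

Section DotProduct.
Variables (R : comNzRingType) (l : nat).
Implicit Types u v w : 'rV[R]_l.

Lemma dotE u v : dot u v = \sum_k u 0 k * v 0 k.
Proof. by rewrite /dot mxE; apply: eq_bigr => k _; rewrite mxE. Qed.

Lemma dotC u v : dot u v = dot v u.
Proof. by rewrite !dotE; apply: eq_bigr => k _; rewrite mulrC. Qed.

Lemma dotDr u v w : dot u (v + w) = dot u v + dot u w.
Proof. by rewrite !dotE -big_split; apply: eq_bigr => k _; rewrite mxE mulrDr. Qed.

Lemma dotNr u v : dot u (- v) = - dot u v.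
Proof. by rewrite !dotE -sumrN; apply: eq_bigr => k _; rewrite mxE mulrN. Qed.

Lemma dot_sumr m u (a : 'I_m -> R) (v : 'I_m -> 'rV_l) :
  dot u (\sum_i a i *: v i) = \sum_i a i * dot u (v i).
Proof.
rewrite dotE; under eq_bigr do rewrite summxE mulr_sumr.
rewrite exchange_big; apply: eq_bigr => i _; rewrite dotE mulr_sumr.
by apply: eq_bigr => k _; rewrite mxE mulrCA.
Qed.

Lemma dot_delta u k : dot u (delta_mx 0 k) = u 0 k.
Proof.
rewrite dotE (bigD1 k) //= mxE !eqxx mulr1 big1 ?addr0 // => j /negbTE jk.
by rewrite mxE jk andbF mulr0.
Qed.

Lemma dot_sqr u : dot u u = \sum_k u 0 k ^+ 2.
Proof. by rewrite dotE; under eq_bigr do rewrite -expr2. Qed.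

Lemma mulmx_gram (f g : 'I_l -> 'rV[R]_l) :
  (\matrix_i f i) *m (\matrix_i g i)^T = \matrix_(i, j) dot (f i) (g j).
Proof.
apply/matrixP => i j; rewrite !mxE dotE; apply: eq_bigr => k _.
by rewrite !mxE.
Qed.

Lemma dot_mulmx_tr u (f : 'I_l -> 'rV[R]_l) i :
  (u *m (\matrix_i f i)^T) 0 i = dot u (f i).
Proof. by rewrite mxE dotE; apply: eq_bigr => k _; rewrite !mxE. Qed.

End DotProduct.

Lemma dot_hroot_gram (R : comNzRingType) l (c : R) (gamma root : 'I_l -> 'rV[R]_l) :
  (forall i j, dot (gamma i) (gamma j) = c * dot (root i) (root j)) ->
  dot (hroot gamma) (hroot gamma) = c * dot (hroot root) (hroot root).
Proof.
move=> gram; rewrite !dot_sumr mulr_sumr; apply: eq_bigr => i _.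
rewrite dotC [dot (hroot root) _]dotC !dot_sumr !mulr_sumr.
by apply: eq_bigr => j _; rewrite gram; ring.
Qed.

Section DualBasis.
Variables (R : fieldType) (l : nat) (root weight : 'I_l -> 'rV[R]_l).
Hypothesis weight_root : forall i j, dot (weight j) (root i) = (i == j)%:R.

Lemma mulmx_weight_root : (\matrix_i weight i) *m (\matrix_i root i)^T = 1%:M.
Proof. by apply/matrixP => i j; rewrite mulmx_gram !mxE weight_root eq_sym. Qed.

Lemma mulmx_root_weight : (\matrix_i root i)^T *m (\matrix_i weight i) = 1%:M.
Proof. exact: mulmx1C mulmx_weight_root. Qed.

Lemma mulmx_tr_weight_root : (\matrix_i weight i)^T *m (\matrix_i root i) = 1%:M.
Proof. by rewrite -[\matrix_i root i]trmxK -trmx_mul mulmx_root_weight trmx1. Qed.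

Lemma eq_of_dot_root u v : (forall i, dot u (root i) = dot v (root i)) -> u = v.
Proof.
move=> uv; have uvR : u *m (\matrix_i root i)^T = v *m (\matrix_i root i)^T.
  by apply/matrixP => z i; rewrite ord1 !dot_mulmx_tr.
by rewrite -[u]mulmx1 -[v]mulmx1 -mulmx_root_weight !mulmxA uvR.
Qed.

Lemma eq_of_dot_weight u v : (forall j, dot u (weight j) = dot v (weight j)) -> u = v.
Proof.
move=> uv; have uvW : u *m (\matrix_i weight i)^T = v *m (\matrix_i weight i)^T.
  by apply/matrixP => z i; rewrite ord1 !dot_mulmx_tr.
by rewrite -[u]mulmx1 -[v]mulmx1 -mulmx_tr_weight_root !mulmxA uvW.
Qed.

End DualBasis.

Section Similarity.
Variables (R : realFieldType) (l : nat) (c : R).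
Variables (gamma root weight : 'I_l -> 'rV[R]_l).
Hypothesis c_gt0 : 0 < c.
Hypothesis gram_gamma : forall i j, dot (gamma i) (gamma j) = c * dot (root i) (root j).
Hypothesis weight_root : forall i j, dot (weight j) (root i) = (i == j)%:R.

Definition simil_mx : 'M[R]_l := (\matrix_i gamma i)^T *m \matrix_i weight i.

Definition simil (x : 'rV[R]_l) : 'rV[R]_l := x *m simil_mx.

Lemma dot_simil_root x i : dot (simil x) (root i) = dot x (gamma i).
Proof.
by rewrite -dot_mulmx_tr -!mulmxA mulmx_weight_root // mulmx1 dot_mulmx_tr.
Qed.

Lemma mulmx_tr_simil_mx : simil_mx^T *m simil_mx = c%:M.
Proof.
have gram : (\matrix_i gamma i) *m (\matrix_i gamma i)^T
            = c *: ((\matrix_i root i) *m (\matrix_i root i)^T).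
  by apply/matrixP => i j; rewrite !mulmx_gram !mxE gram_gamma.
rewrite trmx_mul trmxK mulmxA -(mulmxA _ (\matrix_i gamma i)) gram.
rewrite -scalemxAr -scalemxAl !mulmxA mulmx_tr_weight_root // mul1mx.
by rewrite mulmx_root_weight // scalemx1.
Qed.

Lemma mulmx_simil_mx_tr : simil_mx *m simil_mx^T = c%:M.
Proof.
have c_neq0 : c != 0 by rewrite gt_eqF.
have inv : (c^-1 *: simil_mx^T) *m simil_mx = 1%:M.
  by rewrite -scalemxAl mulmx_tr_simil_mx scale_scalar_mx mulVf.
have := mulmx1C inv; rewrite -scalemxAr => scaled.
by rewrite -[LHS]scale1r -(mulfV c_neq0) -scalerA scaled scalemx1.
Qed.

Lemma dot_simil x y : dot (simil x) (simil y) = c * dot x y.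
Proof.
rewrite /dot /simil trmx_mul -(mulmxA x) (mulmxA simil_mx) mulmx_simil_mx_tr.
by rewrite mul_scalar_mx -scalemxAr mxE.
Qed.

Lemma simil_surj y : exists x, simil x = y.
Proof.
have c_neq0 : c != 0 by rewrite gt_eqF.
exists (c^-1 *: (y *m simil_mx^T)).
by rewrite /simil -scalemxAl -mulmxA mulmx_tr_simil_mx mul_mx_scalar scalerA mulVf ?scale1r.
Qed.

Lemma dot_simil_hroot x : dot (simil x) (hroot root) = dot x (hroot gamma).
Proof. by rewrite !dot_sumr; under eq_bigr do rewrite dot_simil_root. Qed.

Lemma PGamma_simil (e e' : 'I_l -> 'rV[R]_l) (S : pred 'I_l) :
    (forall j, S j -> simil (e j) = e' j) ->
  forall x, PGamma gamma e (hroot gamma) S x <-> PGamma root e' (hroot root) S (simil x).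
Proof.
move=> ee' x; rewrite /PGamma /alcove dot_simil_hroot.
have scale_le j : S j ->
    (dot x (e j) <= dot (e j) (e j) / 2) = (dot (simil x) (e' j) <= dot (e' j) (e' j) / 2).
  by move=> Sj; rewrite -ee' // !dot_simil -mulrA ler_pM2l.
split=> -[[root_ge0 psi_le1] e_le]; (split; first split) => //.
- by move=> i; rewrite dot_simil_root.
- by move=> j Sj; rewrite -scale_le // e_le.
- by move=> i; rewrite -dot_simil_root.
- by move=> j Sj; rewrite scale_le // e_le.
Qed.

End Similarity.

Lemma maxnorm_is_similarity (R : rcfType) l (f : 'rV[R]_l -> 'rV[R]_l) (c r : R)
    (P Q : 'rV[R]_l -> Prop) :
  0 < c -> (forall x, dot (f x) (f x) = c * dot x x) -> (forall y, exists x, f x = y) ->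
  (forall x, P x <-> Q (f x)) -> maxnorm_is Q (Num.sqrt c * r) -> maxnorm_is P r.
Proof.
move=> c_gt0 f_dot f_surj PQ [[y Qy y_norm] Q_le].
have sqrtc_gt0 : 0 < Num.sqrt c by rewrite sqrtr_gt0.
have norm_f x : Num.sqrt (dot (f x) (f x)) = Num.sqrt c * Num.sqrt (dot x x).
  by rewrite f_dot sqrtrM // ltW.
split.
- have [x fx] := f_surj y; exists x; first by apply/PQ; rewrite fx.
  by apply: (mulfI (lt0r_neq0 sqrtc_gt0)); rewrite -norm_f fx.
- by move=> x /PQ /Q_le; rewrite norm_f ler_pM2l.
Qed.

Lemma sum_sqr_le_of_sum_le (R : realFieldType) L (t : 'I_L -> R) :
    (forall k, 0 <= t k <= 1 / 2) -> \sum_k t k <= L%:R / 4 ->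
  \sum_k t k ^+ 2 <= (L.*2 - odd L)%:R / 16.
Proof.
move=> t_bnd t_sum; pose K := (\sum_k ((1 / 4 < t k)%R : nat))%N.
(* The chords of t |-> t^2 over [0, 1/4] and [1/4, 1/2]; K counts the t k beyond 1/4. *)
have chords k : t k ^+ 2 <= t k / 4 + ((1 / 4 < t k)%R : nat)%:R / 8
             /\ t k ^+ 2 <= t k * (3 / 4) - ((1 / 4 < t k)%R : nat)%:R / 8.
  by have /andP[? ?] := t_bnd k; case: ltP => /= ?; rewrite expr2; split; nra.
have le_chord1 : \sum_k t k ^+ 2 <= (\sum_k t k) / 4 + K%:R / 8.
  by rewrite natr_sum !mulr_suml -big_split; apply: ler_sum => k _; case: (chords k).
have le_chord2 : \sum_k t k ^+ 2 <= (\sum_k t k) * (3 / 4) - K%:R / 8.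
  by rewrite natr_sum !mulr_suml -sumrB; apply: ler_sum => k _; case: (chords k).
set m := L./2; set o := odd L.
have L_R : L%:R = o%:R + 2 * m%:R :> R.
  by rewrite -[in LHS](odd_double_half L) natrD -muln2 natrM mulrC.
have L2_R : (L.*2 - o)%:R = o%:R + 4 * m%:R :> R.
  have -> : (L.*2 - o = o + m * 4)%N by rewrite -[in LHS](odd_double_half L); lia.
  by rewrite natrD natrM mulrC.
have o_le1 : o%:R <= 1%:R :> R by rewrite ler_nat leq_b1.
rewrite L2_R; rewrite L_R in t_sum.
have [K_le | K_gt] := leqP K m.
  by move: K_le; rewrite -(ler_nat R); lra.
by move: K_gt; rewrite -(ler_nat R) -addn1 natrD; lra.
Qed.

Ltac case_nat := repeat match goal with
  | |- context[(?x <= ?y)%N] => let E := fresh in case E: (x <= y)%N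
  | |- context[(?x == ?y :> nat)] => let E := fresh in case E: (x == y)
  end.

Section StandardD.
Variables (R : realFieldType) (n : nat).
Local Notation L := n.+4.
Implicit Types (w : 'rV[R]_L) (i j k : 'I_L).

Definition rootD i : 'rV[R]_L :=
  if (i <= n.+2)%N then delta_mx 0 i - delta_mx 0 (inord i.+1)
  else delta_mx 0 (inord n.+2) + delta_mx 0 (inord n.+3).

(* eps_0 + ... + eps_j for j < L - 2, and (eps_0 + ... + eps_(L-2) -/+ eps_(L-1)) / 2
   for j = L - 2, L - 1. *)
Definition weightD j : 'rV[R]_L := \row_k
  if (j <= n.+1)%N then (k <= j)%N%:R
  else if (k <= n.+2)%N then 1 / 2
  else if (j == n.+3 :> nat) then 1 / 2 else - (1 / 2).

Lemma dot_rootD w i : dot w (rootD i) =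
  if (i <= n.+2)%N then w 0 i - w 0 (inord i.+1)
  else w 0 (inord n.+2) + w 0 (inord n.+3).
Proof. by rewrite /rootD; case: ifP => _; rewrite ?dotDr ?dotNr !dot_delta. Qed.

Lemma weightD_rootD i j : dot (weightD j) (rootD i) = (i == j)%:R.
Proof.
rewrite dot_rootD !mxE -val_eqE /=.
have := ltn_ord i; have := ltn_ord j.
case: ifP => i_le; rewrite !inordK //; try lia;
  move: (i : nat) (j : nat) i_le => a b ? ? ?; case_nat => /=; lia || lra.
Qed.

Lemma rootD_gram i j : dot (rootD i) (rootD j) = cartanD R i j.
Proof.
rewrite dot_rootD /rootD /cartanD /adjD !subSS !subn0 -val_eqE /=.
have := ltn_ord i; have := ltn_ord j.
case: ifP => j_le; case: ifP => i_le; rewrite !mxE -?val_eqE /= ?inordK //; try lia;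
  move: (i : nat) (j : nat) i_le j_le => a b ? ? ? ?; case_nat => /=; lia || lra.
Qed.

Lemma hroot_rootD : hroot rootD = delta_mx 0 (inord 0) + delta_mx 0 (inord 1).
Proof.
apply: (eq_of_dot_weight weightD_rootD) => j.
rewrite dotC dot_sumr dotC dotDr !dot_delta.
under eq_bigr do rewrite weightD_rootD.
rewrite (bigD1 j) //= eqxx mulr1 big1 ?addr0 => [|i /negbTE -> //]; last by rewrite mulr0.
rewrite /dcoef !mxE !inordK //= !subSS subn0.
by have := ltn_ord j; move: (j : nat) => b ?; case_nat => /=; lia || lra.
Qed.

Lemma dot_hrootD w : dot w (hroot rootD) = w 0 (inord 0) + w 0 (inord 1).
Proof. by rewrite hroot_rootD dotDr !dot_delta. Qed.

Lemma dot_hrootD_self : dot (hroot rootD) (hroot rootD) = 2.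
Proof. by rewrite dot_hrootD hroot_rootD !mxE !eqxx -!val_eqE /= !inordK //=; lra. Qed.

Lemma weightD_first : weightD (inord 0) = delta_mx 0 (inord 0).
Proof.
by apply/matrixP => z k; rewrite ord1 !mxE eqxx -val_eqE /= inordK // leqn0.
Qed.

Lemma dot_weightD_last w : dot w (weightD (inord n.+3)) = (\sum_k w 0 k) / 2.
Proof.
rewrite dotE mulr_suml; apply: eq_bigr => k _; rewrite !mxE inordK //.
by case_nat => /=; lia || lra.
Qed.

Lemma weightD_spin :
  weightD (inord n.+2) = weightD (inord n.+3) - delta_mx 0 (inord n.+3).
Proof.
apply/matrixP => z k; rewrite ord1 !mxE eqxx -val_eqE /= !inordK //.
by have := ltn_ord k; move: (k : nat) => a ?; case_nat => /=; lia || lra.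
Qed.

Lemma dot_weightD_spin w :
  dot w (weightD (inord n.+2)) = (\sum_k w 0 k) / 2 - w 0 (inord n.+3).
Proof. by rewrite weightD_spin dotDr dotNr dot_delta dot_weightD_last. Qed.

Lemma dot_weightD_half j : (n.+2 <= j)%N -> dot (weightD j) (weightD j) = L%:R / 4.
Proof.
move=> j_ge; rewrite dot_sqr (eq_bigr (fun=> 1 / 4)) => [|k _].
  by rewrite sumr_const card_ord -mulr_natl; lra.
rewrite mxE; move: (j : nat) (k : nat) j_ge => a b ?; case_nat => /=; try lia; lra.
Qed.

End StandardD.

Section Extremal.
Variables (R : realFieldType) (L : nat).

Local Notation profile a b := (fun k : 'I_L =>
  (if (k < L./2)%N then a else 0) + (if odd L && (k == L./2 :> nat) then b else 0)).

Definition extremal : 'rV[R]_L := \row_k profile (1 / 2) (1 / 4) k.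

Lemma sum_profile (a b : R) : \sum_k profile a b k = L./2%:R * a + (odd L)%:R * b.
Proof.
rewrite big_split /= -!big_mkcond /= -(big_ord_widen _ (fun=> a)); last first.
  by rewrite leq_half_double -addnn; lia.
rewrite sumr_const card_ord mulr_natl; congr (_ + _).
case: (boolP (odd L)) => [odd_L | _] /=; last by rewrite big_pred0 // mul0r.
rewrite big_ord1_eq ifT ?mul1r //.
by have := odd_double_half L; rewrite odd_L -muln2; lia.
Qed.

Lemma extremal_ge0 k : 0 <= extremal 0 k.
Proof. by rewrite mxE; case: ifP; case: ifP => _ _; lra. Qed.

Lemma extremal_antitone (j k : 'I_L) : (j <= k)%N -> extremal 0 k <= extremal 0 j.
Proof.
rewrite !mxE; have := odd_double_half L.
move: (odd L) (L./2) (j : nat) (k : nat) => o m a b.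
by case: o => /= ? ?; case_nat => /=; lia || lra.
Qed.

Lemma sum_extremal : \sum_k extremal 0 k = L%:R / 4.
Proof.
under eq_bigr do rewrite mxE.
rewrite sum_profile -{3}(odd_double_half L) natrD -muln2 natrM; lra.
Qed.

Lemma dot_extremal : dot extremal extremal = (L.*2 - odd L)%:R / 16.
Proof.
rewrite dot_sqr (eq_bigr (profile (1 / 4) (1 / 16))) => [|k _]; last first.
  rewrite mxE expr2; move: (odd L) (L./2) (k : nat) => o m a.
  by case: o => /=; case_nat => /=; lia || lra.
rewrite sum_profile.
have -> : (L.*2 - odd L = odd L + L./2 * 4)%N by rewrite -{1 2}(odd_double_half L); lia.
by rewrite natrD natrM; lra.
Qed.

End Extremal.

Section PGammaD.
Variables (R : realFieldType) (n : nat).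
Local Notation L := n.+4.
Local Notation weight := (@weightD R n).
Local Notation PGammaD :=
  (PGamma (@rootD R n) (@weightD R n) (hroot (@rootD R n)) (@GammaIdxD L)).
Implicit Types w : 'rV[R]_L.

Lemma GammaIdxDP (j : 'I_L) :
  GammaIdxD j <-> [\/ j = inord 0, j = inord n.+2 | j = inord n.+3].
Proof.
rewrite /GammaIdxD !subSS !subn0; split.
  by case/orP => [/orP[]|] /eqP j_eq; [apply: Or31 | apply: Or32 | apply: Or33];
    apply/val_inj; rewrite /= inordK ?j_eq.
by case=> ->; rewrite inordK ?eqxx ?orbT.
Qed.

Lemma PGammaD_weight_le w :
  (forall j, GammaIdxD j -> dot w (weight j) <= dot (weight j) (weight j) / 2) <->
  [/\ w 0 (inord 0) <= 1 / 2, \sum_k w 0 k <= L%:R / 4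
    & \sum_k w 0 k - 2 * w 0 (inord n.+3) <= L%:R / 4].
Proof.
have spin_self : dot (weight (inord n.+2)) (weight (inord n.+2)) = L%:R / 4.
  by rewrite dot_weightD_half ?inordK.
have last_self : dot (weight (inord n.+3)) (weight (inord n.+3)) = L%:R / 4.
  by rewrite dot_weightD_half ?inordK.
have first_self : dot (weight (inord 0)) (weight (inord 0)) = 1.
  by rewrite weightD_first dot_delta mxE !eqxx.
have [S_first S_spin S_last] : [/\ GammaIdxD (inord 0 : 'I_L),
    GammaIdxD (inord n.+2 : 'I_L) & GammaIdxD (inord n.+3 : 'I_L)].
  by split; apply/GammaIdxDP; [constructor 1 | constructor 2 | constructor 3].
split=> [w_le | [first_le sum_le spin_le] j /GammaIdxDP[] ->].
- move: (w_le _ S_first) (w_le _ S_spin) (w_le _ S_last).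
  rewrite first_self spin_self last_self weightD_first dot_delta.
  by rewrite dot_weightD_spin dot_weightD_last; split; lra.
- by rewrite first_self weightD_first dot_delta.
- by rewrite spin_self dot_weightD_spin; lra.
- by rewrite last_self dot_weightD_last; lra.
Qed.

Lemma PGammaD_extremal : PGammaD (extremal R L).
Proof.
have [first second last] : [/\ extremal R L 0 (inord 0) = 1 / 2,
    extremal R L 0 (inord 1) = 1 / 2 & extremal R L 0 (inord n.+3) = 0].
  rewrite !mxE !inordK //; have := odd_double_half L.
  by move: (odd L) (L./2) => o m; case: o => /= ?; split; case_nat => /=; lia || lra.
split; first split.
- move=> i; rewrite dot_rootD; case: ifP => i_le.
    by rewrite subr_ge0 extremal_antitone // inordK.
  by rewrite addr_ge0 ?extremal_ge0.
- by rewrite dot_hrootD first second; lra.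
- by apply/PGammaD_weight_le; rewrite first last sum_extremal; split; lra.
Qed.

Lemma PGammaD_dot_le w : PGammaD w -> dot w w <= (L.*2 - odd L)%:R / 16.
Proof.
move=> [[root_ge0 _] /PGammaD_weight_le [first_le sum_le spin_le]].
pose v p := w 0 (inord p).
have v_antitone :
    {in [pred p | p <= n.+2]%N &, {homo v : p q / (p <= q)%N >-> q <= p}}.
  apply: homo_leq_in => [x|y x z yx zy|p q _ q_le r /andP[_ r_lt]|p p_le _].
  - exact: lexx.
  - exact: le_trans zy yx.
  - by rewrite inE (leq_trans (ltnW r_lt)).
  rewrite inE in p_le.
  by have := root_ge0 (inord p); rewrite dot_rootD !inordK ?p_le ?subr_ge0 //; lia.
have last_le : `|v n.+3| <= v n.+2.
  have := root_ge0 (inord n.+2); have := root_ge0 (inord n.+3).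
  by rewrite /v !dot_rootD !inordK //= ltnn leqnn ler_norml => ? ?; apply/andP; split; lra.
have wE (k : 'I_L) : w 0 k = v k by rewrite /v inord_val.
have head_ge p : (p <= n.+2)%N -> `|v n.+3| <= v p.
  by move=> p_le; apply: le_trans last_le (v_antitone _ _ _ _ _); rewrite ?inE.
have head_le p : (p <= n.+2)%N -> v p <= 1 / 2.
  by move=> p_le; apply: le_trans (v_antitone _ _ _ _ _) first_le; rewrite ?inE.
rewrite dot_sqr; under eq_bigr do rewrite -(real_normK (num_real _)).
apply: sum_sqr_le_of_sum_le => [k|].
  rewrite normr_ge0 wE; have [k_le | k_gt] := leqP k n.+2.
    by rewrite ger0_norm ?head_le //; apply: le_trans (head_ge _ k_le).
  have -> : (k : nat) = n.+3 by have := ltn_ord k; lia.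
  by apply: le_trans last_le (head_le _ (leqnn _)).
rewrite big_ord_recr /=; rewrite big_ord_recr /= in sum_le spin_le.
rewrite (eq_bigr (fun k => w 0 (widen_ord (leqnSn _) k))) => [|k _]; last first.
  by rewrite ger0_norm // wE; apply: le_trans (normr_ge0 _) (head_ge _ (ltn_ord k)).
rewrite wE in sum_le spin_le *; rewrite /v /= in sum_le spin_le *.
by case: (lerP 0 (w 0 (inord n.+3))) => w_sgn; [rewrite ger0_norm | rewrite ltr0_norm]; lra.
Qed.

End PGammaD.

Lemma maxnorm_PGammaD (R : rcfType) n :
  maxnorm_is (PGamma (@rootD R n) (@weightD R n) (hroot (@rootD R n)) (@GammaIdxD n.+4))
    (Num.sqrt (((n.+4).*2 - odd n.+4)%:R / 16)).
Proof.
split; first by exists (extremal R n.+4); rewrite ?dot_extremal //; apply: PGammaD_extremal.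
by move=> x /PGammaD_dot_le x_le; rewrite ler_sqrt // divr_ge0 ?ler0n.
Qed.

Lemma dcoef_GammaIdxD (R : nzRingType) l (j : 'I_l) : GammaIdxD j -> dcoef R j = 1.
Proof. by move=> Sj; rewrite /dcoef ifT. Qed.

Lemma sqrt_mul_radiusD (R : rcfType) (L : nat) (c : R) : 0 < c ->
  Num.sqrt c * (if ~~ odd L then 1 / 2 * (Num.sqrt (c * 2))^-1 * Num.sqrt L%:R
                else Num.sqrt 2 / 4 * (Num.sqrt (c * 2))^-1 * Num.sqrt (L.*2 - 1)%:R)
  = Num.sqrt ((L.*2 - odd L)%:R / 16).
Proof.
move=> c_gt0; have c_neq0 : c != 0 by rewrite gt_eqF.
have sqrt_eq x a : 0 <= x -> x ^+ 2 = a -> Num.sqrt a = x.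
  by move=> x_ge0 <-; rewrite sqrtr_sqr ger0_norm.
symmetry; apply: sqrt_eq.
  by case: ifP => _; rewrite !mulr_ge0 ?invr_ge0 ?sqrtr_ge0 ?divr_ge0 ?sqrtr_ge0 ?ler0n.
case: (boolP (odd L)) => /= _;
  rewrite !exprMn !exprVn !sqr_sqrtr ?mulr_ge0 ?ler0n ?ltW // ?subn0 -?muln2 ?natrM;
  by field.
Qed.

Unset Implicit Arguments.

Theorem mainTheorem18 (R : rcfType) (l : nat) (hl : (4 <= l)%N) (c : R) (hc : 0 < c)
  (gamma e : 'I_l -> 'rV[R]_l)
  (hgram : forall i j, dot (gamma i) (gamma j) = c * cartanD R i j)
  (he : forall i j, dot (e j) (gamma i) = (i == j)%:R / dcoef R j) :
  let psi := hroot gamma in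
  maxnorm_is (PGamma gamma e psi (@GammaIdxD l))
    (if ~~ odd l then
       1 / 2 * (Num.sqrt (dot psi psi))^-1 * Num.sqrt l%:R
     else
       Num.sqrt 2 / 4 * (Num.sqrt (dot psi psi))^-1 * Num.sqrt (l.*2 - 1)%:R).
Proof.
move=> psi; have [n l_eq] : exists n, l = n.+4 by exists (l - 4)%N; lia.
subst l.
have gram i j : dot (gamma i) (gamma j) = c * dot (rootD R i) (rootD R j).
  by rewrite hgram rootD_gram.
have dual := @weightD_rootD R n.
have simil_e j : GammaIdxD j -> simil gamma (@weightD R n) (e j) = weightD R j.
  move=> Sj; apply: (eq_of_dot_root dual) => i.
  by rewrite (dot_simil_root gamma dual) he dual (dcoef_GammaIdxD _ Sj) divr1.
apply: (maxnorm_is_similarity (f := simil gamma (@weightD R n)) hc).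
- by move=> x; apply: (dot_simil hc gram dual).
- exact: (simil_surj hc gram dual).
- exact: (PGamma_simil hc gram dual simil_e).
rewrite /psi (dot_hroot_gram gram) dot_hrootD_self sqrt_mul_radiusD //.
exact: maxnorm_PGammaD.
Qed.
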